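(* Let $n\ge2$ and $s\ge1$ be integers and $b\ge2$ an integer. For a degree pattern $\mathbf d=(d_1,\dots,d_s)\in\mathbb N^s$ with $d_1\ge\cdots\ge d_s\ge1$ and $d_1\ge2$, put $\delta(\mathbf d)=d_1\cdots d_s$ and $|\mathbf D(\mathbf d)|=\sum_{i=1}^s\big(\binom{d_i+n}{n}-1\big)$. Let $\mathbf d^{(b)}=(b,1,\dots,1)\in\mathbb N^s$. Then $|\mathbf D(\mathbf d^{(b)})|>|\mathbf D(\mathbf d)|$ for every such degree pattern $\mathbf d\ne\mathbf d^{(b)}$ with $\delta(\mathbf d)=b$. *)

From mathcomp Require Import all_boot.
Set Implicit Arguments. Unset Strict Implicit. Unset Printing Implicit Defensive.

Definition delta (d : seq nat) : nat := \prod_(x <- d) x.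

Definition cardD (n : nat) (d : seq nat) : nat :=
  \sum_(x <- d) ('C(x + n, n) - 1).

Definition degree_pattern (s : nat) (d : seq nat) : Prop :=
  size d = s /\ sorted geq d /\ all (fun x => 0 < x) d /\ 2 <= head 0 d.

Definition dpat_b (s b : nat) : seq nat := b :: nseq s.-1 1.

From mathcomp Require Import all_boot zify.

Set Implicit Arguments.
Unset Strict Implicit.
Unset Printing Implicit Defensive.

(* Write h k = 'C(k + n, n) with n >= 1. Its increments 'C(k + n, n - 1) grow
   with k, so h is convex; hence h (x y) + h 1 >= h x + h y for x, y >= 1,
   strictly when x, y >= 2.  Iterating over a pattern d gives
   |D(d)| + s <= h (delta d) + (s - 1) h 1 = |D(d^(b))| + s, and splitting d as
   (d_1, rest) with both factors >= 2 makes the inequality strict. *)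

Section BinomialShift.

Variable n : nat.
Local Notation h k := 'C(k + n.+1, n.+1).

Lemma bin_shiftS k : h k.+1 = h k + 'C(k + n.+1, n).
Proof. by rewrite addSn binS addnC. Qed.

Lemma ltn_bin_shift a c : a < c -> h a < h c.
Proof.
move=> lt_ac; apply: (@leq_trans (h a.+1)); last by rewrite leq_bin2l ?leq_add2r.
rewrite bin_shiftS -[X in X < _]addn0 ltn_add2l bin_gt0; lia.
Qed.

Lemma bin_shift_supermodular a c m : a <= c -> h (a + m) + h c <= h (c + m) + h a.
Proof.
move=> le_ac; elim: m => [|m IHm]; first by rewrite !addn0 addnC.
rewrite (addnS a m) (addnS c m) !bin_shiftS.
have : 'C(a + m + n.+1, n) <= 'C(c + m + n.+1, n) by rewrite leq_bin2l // !leq_add2r.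
lia.
Qed.

Lemma bin_shift_mul_ge x y :
  0 < x -> 0 < y -> h (1 + y * (x - 1)) + h y <= h (x * y) + h 1.
Proof.
move=> x_gt0 y_gt0; have -> : x * y = y + y * (x - 1) by nia.
exact: bin_shift_supermodular.
Qed.

Lemma bin_shift_mul x y : 0 < x -> 0 < y -> h x + h y <= h (x * y) + h 1.
Proof.
move=> x_gt0 y_gt0; have := bin_shift_mul_ge x_gt0 y_gt0.
have : h x <= h (1 + y * (x - 1)) by rewrite leq_bin2l // leq_add2r; nia.
lia.
Qed.

Lemma bin_shift_mul_lt x y : 1 < x -> 1 < y -> h x + h y < h (x * y) + h 1.
Proof.
move=> x_gt1 y_gt1; have := bin_shift_mul_ge (ltnW x_gt1) (ltnW y_gt1).
have : h x < h (1 + y * (x - 1)) by apply: ltn_bin_shift; nia.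
lia.
Qed.

Lemma sum_bin_shift_le_prod d : all (fun x => 0 < x) d ->
  \sum_(x <- d) h x + h 1 <= h (\prod_(x <- d) x) + size d * h 1.
Proof.
elim: d => [|x d IHd] /=; first by rewrite !big_nil addnC.
case/andP=> x_gt0 d_pos; rewrite !big_cons.
have prod_gt0 : 0 < \prod_(y <- d) y.
  by rewrite big_seq; apply: prodn_cond_gt0 => y /(allP d_pos).
have := IHd d_pos; have := bin_shift_mul x_gt0 prod_gt0; lia.
Qed.

End BinomialShift.

Lemma cardD_add_size n d : cardD n d + size d = \sum_(x <- d) 'C(x + n, n).
Proof.
elim: d => [|x d IHd]; first by rewrite /cardD !big_nil.
move: IHd; rewrite /cardD /= !big_cons.
have : 0 < 'C(x + n, n) by rewrite bin_gt0 leq_addl.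
lia.
Qed.

Lemma sum_bin_dpat_b n s b :
  \sum_(x <- dpat_b s b) 'C(x + n, n) = 'C(b + n, n) + s.-1 * 'C(1 + n, n).
Proof. by rewrite big_cons big_nseq iter_addn_0 mulnC. Qed.

Lemma prod_eq1_nseq (d : seq nat) : \prod_(x <- d) x = 1 -> d = nseq (size d) 1.
Proof. by move/eqP; rewrite prod_nat_seq_eq1 => /all_pred1P. Qed.

Theorem lemma5p1 (n s b : nat) (d : seq nat) :
  2 <= n -> 1 <= s -> 2 <= b ->
  degree_pattern s d ->
  d <> dpat_b s b ->
  delta d = b ->
  cardD n d < cardD n (dpat_b s b).
Proof.
case: n => [|n] // _ _ b_gt1 [size_d [_ [d_pos d1_gt1]]] d_neq.
case: d size_d d_pos d1_gt1 d_neq => [|x d] //= size_d /andP [x_gt0 d_pos] x_gt1 d_neq.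
rewrite /delta big_cons; set P := \prod_(y <- d) y => xP_b.
have P_gt1 : 1 < P.
  have : 0 < P by move: b_gt1; rewrite -xP_b; nia.
  rewrite leq_eqVlt => /predU1P [P1 | //]; case: d_neq.
  by rewrite -size_d /dpat_b -xP_b -P1 muln1 {1}(prod_eq1_nseq (esym P1)).
have := cardD_add_size n.+1 (x :: d); have := cardD_add_size n.+1 (dpat_b s b).
rewrite sum_bin_dpat_b big_cons /= size_nseq -size_d /= -xP_b.
have := sum_bin_shift_le_prod n d_pos; rewrite -/P; have := bin_shift_mul_lt n x_gt1 P_gt1.
lia.
Qed.
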